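(* Let $k>0$ and let $T$ be large. For every $1\le j\le \mathcal{J}$ and every complex number $s$, writing $K_j=\lceil e^2k\alpha_j^{-3/4}\rceil$ and $\delta_j = e^{-e^2k\alpha_j^{-3/4}}$: (i) if $0<k\le 1/2$, then $$|\mathcal{N}_j(s,k)|^{2/k}|\mathcal{N}_j(s,k-1)|^{2} \le |\mathcal{N}_j(s,k)|^2(1+\delta_j)^{2/k+2}(1-\delta_j)^{-2} + |\mathcal{Q}_j(s,k)|^{2r_k};$$ (ii) if $k>1/2$, then $$|\mathcal{N}_j(s,k-1)\mathcal{N}_j(s,k)|^{\frac{2k}{2k-1}} \le |\mathcal{N}_j(s,k)|^2(1+\delta_j)^{\frac{2k}{2k-1}}(1-\delta_j)^{-2} + |\mathcal{Q}_j(s,k)|^{2r_k}.$$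
   Context: Fix real $k>0$, a large number $M$ depending only on $k$, and a large number $T$. Set $\alpha_0=0$, $\alpha_j = 20^{j-1}/(\log\log T)^2$ for $j\ge1$, and $\mathcal{J}=1+\max\{j:\alpha_j\le 10^{-M}\}$. Let $I_j=(T^{\alpha_{j-1}},T^{\alpha_j}]$ for $1\le j\le\mathcal{J}$. For real $\ell$ and $x$ (or complex $x$) put $E_\ell(x)=\sum_{i=0}^{\lceil \ell\rceil} x^i/i!$. For $1\le j\le \mathcal{J}$, real $\alpha$ and complex $s$ define $\mathcal{P}_j(s)=\sum_{p\in I_j}p^{-s}$ ($p$ prime), $\mathcal{N}_j(s,\alpha)=E_{e^2k\alpha_j^{-3/4}}(\alpha\mathcal{P}_j(s))$, and $$\mathcal{Q}_j(s,k)=\Big(\frac{64\max(2,k+3/2)\,\mathcal{P}_j(s)}{\lceil e^2k\alpha_j^{-3/4}\rceil}\Big)^{\lceil e^2k\alpha_j^{-3/4}\rceil}.$$ Set $r_k=2+\lceil 1/k\rceil$ if $0<k\le1/2$ and $r_k=1+\lceil 2k/(2k-1)\rceil$ if $k>1/2$. *)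

From Stdlib Require Import Reals ZArith Znumtheory.
From Coquelicot Require Import Coquelicot.
Open Scope R_scope.

Definition ceilZ (x : R) : Z := (- Int_part (- x))%Z.
Definition ceilN (x : R) : nat := Z.to_nat (ceilZ x).

(* x^y for x >= 0 and y > 0, with 0^y = 0 (Stdlib's Rpower 0 y = 1) *)
Definition rpow (x y : R) : R := if Req_EM_T x 0 then 0 else Rpower x y.

(* n^{-s} for a positive integer n and complex s = sigma + i t *)
Definition npow_neg (n : nat) (s : C) : C :=
  let L := ln (INR n) in
  (exp (- (Re s) * L) * cos (Im s * L), - (exp (- (Re s) * L) * sin (Im s * L))).

Definition is_primeb (n : nat) : bool :=
  if prime_dec (Z.of_nat n) then true else false.

Definition prime_sum (a b : R) (s : C) : C :=
  sum_n_m (fun n : nat =>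
    if is_primeb n then
      if Rlt_dec a (INR n) then
        if Rle_dec (INR n) b then npow_neg n s else RtoC 0
      else RtoC 0
    else RtoC 0) 0 (Z.to_nat (up b)).

(* alpha_0 = 0, alpha_j = 20^{j-1}/(log log T)^2 *)
Definition alpha (T : R) (j : nat) : R :=
  match j with
  | O => 0
  | S i => 20 ^ i / (ln (ln T)) ^ 2
  end.

(* m is the maximum of {j : alpha_j <= 10^{-M}}; then Jcal = 1 + m *)
Definition is_max_alpha_idx (T M : R) (m : nat) : Prop :=
  alpha T m <= Rpower 10 (- M) /\
  (forall j : nat, alpha T j <= Rpower 10 (- M) -> (j <= m)%nat).

Definition Pj (T : R) (j : nat) (s : C) : C :=
  prime_sum (Rpower T (alpha T (j - 1))) (Rpower T (alpha T j)) s.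

Definition Etrunc (l : R) (x : C) : C :=
  sum_n_m (fun i : nat => (Cpow x i / RtoC (INR (fact i)))%C) 0 (ceilN l).

Definition ell (k T : R) (j : nat) : R := exp 2 * k * Rpower (alpha T j) (- (3 / 4)).

Definition Kj (k T : R) (j : nat) : nat := ceilN (ell k T j).

Definition deltaj (k T : R) (j : nat) : R := exp (- ell k T j).

Definition Nj (k T : R) (j : nat) (s : C) (a : R) : C :=
  Etrunc (ell k T j) (RtoC a * Pj T j s)%C.

Definition Qj (k T : R) (j : nat) (s : C) : C :=
  Cpow (RtoC (64 * Rmax 2 (k + 3 / 2)) * Pj T j s / RtoC (INR (Kj k T j)))%C
       (Kj k T j).

Definition rk (k : R) : nat :=
  if Rle_dec k (1 / 2) then (2 + ceilN (1 / k))%nat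
  else (1 + ceilN (2 * k / (2 * k - 1)))%nat.

From Stdlib Require Import Reals Lra Lia Psatz Arith ZArith Factorial.
From Coquelicot Require Import Coquelicot.
Open Scope R_scope.

(* Lemma 3.2 is a pointwise inequality between truncated exponentials.  Write
   E_K(w) = sum_{i<=K} w^i/i!, z = P_j(s), ell = e^2 k alpha_j^{-3/4}, K = ceil(ell),
   d = e^{-ell}, c = 64 max(2, k+3/2) and u = c|z|/K, so that N_j(s,a) = E_K(az)
   and |Q_j(s,k)| = u^K.  The inequality holds for every z, every ell > 0 and
   every k > 0.

   1. Taylor remainder: |e^y - E_K(y)| <= |y|^{K+1}/(K+1)! e^{|y|}.
   2. Cauchy product: E_K(w)E_K(v) - E_K(w+v) only contains monomials of total
      degree > K, hence is bounded by the same remainder at |w|+|v|.  With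
      v = conj w this gives | |E_K(w)|^2 - e^{2 Re w} | <= e^{-K} e^{2 Re w}
      as soon as |w| <= (K+1)/60.
   3. Crude bound: |E_K(w)| <= u^K whenever |w| <= uK/64 and u >= 21/20.
   4. If u <= 21/20, step 2 compares |E_K(kz)|^2 and |E_K((k-1)z)|^2 with
      e^{2k Re z} and e^{2(k-1) Re z} up to factors 1 +- d, and taking logarithms
      gives the first term of the right-hand side.  If u >= 21/20, step 3 bounds
      the left-hand side by (u^K)^{2 r_k} = |Q_j(s,k)|^{2 r_k}, using that r_k
      dominates the exponents 2/k + 2 and 2k/(2k-1) of parts (i) and (ii). *)

Definition rterm (n : nat) (x : R) : R := x ^ n / INR (fact n).
Definition rtexp (K : nat) (x : R) : R := sum_n_m (fun n => rterm n x) 0 K.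

Lemma fact_pos n : 0 < INR (fact n).
Proof. apply lt_0_INR, lt_O_fact. Qed.

Lemma rterm_nonneg n x : 0 <= x -> 0 <= rterm n x.
Proof.
  intro Hx; unfold rterm.
  apply Rmult_le_pos; [apply pow_le; lra | left; apply Rinv_0_lt_compat, fact_pos].
Qed.

Lemma rtexp_nonneg K x : 0 <= x -> 0 <= rtexp K x.
Proof.
  intro Hx; unfold rtexp.
  rewrite <- (Rmult_0_r (INR (S K - 0))), <- sum_n_m_const.
  apply sum_n_m_le; intro n; apply rterm_nonneg, Hx.
Qed.

Lemma rtexp_mono K x y : 0 <= x <= y -> rtexp K x <= rtexp K y.
Proof.
  intro Hxy; unfold rtexp; apply sum_n_m_le; intro n; unfold rterm.
  apply Rmult_le_compat_r; [left; apply Rinv_0_lt_compat, fact_pos | apply pow_incr, Hxy].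
Qed.

Lemma exp_series x : is_series (fun n => rterm n x) (exp x).
Proof.
  assert (H := is_exp_Reals x); apply is_pseries_R in H.
  eapply is_series_ext; [| exact H]; intro n; unfold rterm; simpl; unfold Rdiv; ring.
Qed.

Lemma exp_tail_series y K :
  is_series (fun m => rterm (S K + m) y) (exp y - rtexp K y).
Proof.
  apply (is_series_incr_n (fun n => rterm n y) (S K)); [lia |].
  replace (plus _ _) with (exp y); [apply exp_series |].
  unfold plus, rtexp, sum_n; simpl; unfold Rminus; rewrite Rplus_assoc, Rplus_opp_l; ring.
Qed.

(* n! m! <= (n+m)!, i.e. binomial coefficients are >= 1. *)
Lemma fact_mult_le n m : (fact n * fact m <= fact (n + m))%nat.
Proof.
  induction m as [| m IH]; [rewrite Nat.add_0_r; simpl; lia |].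
  rewrite Nat.add_succ_r; simpl fact; nia.
Qed.

Lemma rterm_shift_le K m y :
  Rabs (rterm (S K + m) y) <= Rabs y ^ S K / INR (fact (S K)) * rterm m (Rabs y).
Proof.
  unfold rterm, Rdiv; rewrite Rabs_mult, <- RPow_abs, pow_add, Rabs_inv.
  rewrite (Rabs_pos_eq (INR (fact (S K + m)))) by (left; apply fact_pos).
  assert (Hf := fact_mult_le (S K) m); apply le_INR in Hf; rewrite mult_INR in Hf.
  assert (H1 := fact_pos (S K)); assert (H2 := fact_pos m).
  assert (H3 : 0 <= Rabs y ^ S K * Rabs y ^ m)
    by (apply Rmult_le_pos; apply pow_le, Rabs_pos).
  replace (Rabs y ^ S K * / INR (fact (S K)) * (Rabs y ^ m * / INR (fact m)))
    with (Rabs y ^ S K * Rabs y ^ m * / (INR (fact (S K)) * INR (fact m)))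
    by (field; lra).
  apply Rmult_le_compat_l; [exact H3 | apply Rinv_le_contravar; nra].
Qed.

Definition tail_size (r : R) (K : nat) : R := r ^ S K / INR (fact (S K)) * exp r.

Lemma tail_size_mono r r' K : 0 <= r <= r' -> tail_size r K <= tail_size r' K.
Proof.
  intros [H1 H2]; unfold tail_size.
  apply Rmult_le_compat.
  - apply Rmult_le_pos; [apply pow_le; lra | left; apply Rinv_0_lt_compat, fact_pos].
  - left; apply exp_pos.
  - apply Rmult_le_compat_r; [left; apply Rinv_0_lt_compat, fact_pos | apply pow_incr; lra].
  - destruct (Req_dec r r'); [subst; lra | left; apply exp_increasing; lra].
Qed.

Lemma exp_tail_bound y K : Rabs (exp y - rtexp K y) <= tail_size (Rabs y) K.
Proof.
  set (c := Rabs y ^ S K / INR (fact (S K))).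
  assert (Hmaj : is_series (fun m => c * rterm m (Rabs y)) (c * exp (Rabs y)))
    by exact (is_series_scal c _ _ (exp_series (Rabs y))).
  assert (Hdom : forall m, Rabs (rterm (S K + m) y) <= c * rterm m (Rabs y))
    by (intro m; apply rterm_shift_le).
  unfold tail_size; fold c.
  rewrite <- (is_series_unique _ _ (exp_tail_series y K)), <- (is_series_unique _ _ Hmaj).
  eapply Rle_trans; [apply Series_Rabs |].
  - apply (@ex_series_le R_AbsRing R_CompleteNormedModule _ (fun m => c * rterm m (Rabs y)));
      [| eexists; exact Hmaj].
    intro n; unfold norm; simpl; rewrite Rabs_Rabsolu; apply Hdom.
  - apply Series_le; [| eexists; exact Hmaj].
    intro n; split; [apply Rabs_pos | apply Hdom].
Qed.

Lemma rtexp_le_exp K x : 0 <= x -> rtexp K x <= exp x.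
Proof.
  intro Hx.
  enough (0 <= exp x - rtexp K x) by lra.
  rewrite <- (is_series_unique _ _ (exp_tail_series x K)).
  assert (Hzero : Series (fun _ => 0) = 0).
  { unfold Series; rewrite (Lim_seq_ext _ (fun _ => 0)), Lim_seq_const; [reflexivity |].
    intro n; apply (@sum_n_m_const_zero R_AbelianMonoid). }
  rewrite <- Hzero; apply Series_le; [| eexists; apply exp_tail_series].
  intro n; split; [lra | apply rterm_nonneg, Hx].
Qed.

Lemma rterm_le_exp n x : 0 <= x -> rterm n x <= exp x.
Proof.
  intro Hx; eapply Rle_trans; [| apply (rtexp_le_exp n x Hx)]; unfold rtexp.
  destruct n as [| n]; [rewrite sum_n_n; lra |].
  rewrite sum_n_Sm by lia; change plus with Rplus.
  generalize (rtexp_nonneg n x Hx); unfold rtexp; simpl; lra.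
Qed.

Lemma exp_le x y : x <= y -> exp x <= exp y.
Proof. intro H; destruct (Req_dec x y); [subst; lra | left; apply exp_increasing; lra]. Qed.

Lemma exp_nat n c : exp (INR n * c) = exp c ^ n.
Proof.
  induction n as [| n IH]; [simpl; rewrite Rmult_0_l, exp_0; ring |].
  rewrite S_INR, Rmult_plus_distr_r, exp_plus, IH, Rmult_1_l; simpl; ring.
Qed.

Lemma exp_constant_small : exp 1 * exp 1 * exp (1 / 15) / 30 <= 1 / 3.
Proof.
  assert (H15 : exp (1 / 15) <= 15 / 14).
  { assert (H := exp_ineq1_le (- (1 / 15))); assert (Hp := exp_pos (- (1 / 15))).
    rewrite <- (Ropp_involutive (1 / 15)), exp_Ropp.
    replace (15 / 14) with (/ (14 / 15)) by field; apply Rinv_le_contravar; lra. }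
  assert (H3 := exp_le_3); assert (Hp := exp_pos 1); assert (Hp' := exp_pos (1 / 15)).
  assert (exp 1 * exp 1 <= 9) by nra.
  assert (exp 1 * exp 1 * exp (1 / 15) <= 9 * (15 / 14)) by (apply Rmult_le_compat; nra).
  lra.
Qed.

Lemma tail_size_small r K :
  0 <= r <= INR (S K) / 30 -> 2 * tail_size r K * exp r * exp (INR K) <= 1.
Proof.
  intros [H0 H1]; set (n := S K) in *; set (N := INR n) in *.
  assert (HN : 0 < N) by (apply lt_0_INR; unfold n; lia).
  assert (HF := fact_pos n).
  set (q := exp 1 * exp 1 * exp (1 / 15) / 30).
  assert (Hq : 0 <= q <= 1 / 3).
  { split; [| apply exp_constant_small].
    unfold q; generalize (exp_pos 1) (exp_pos (1 / 15)); intros; apply Rmult_le_pos; [nra | lra]. }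
  assert (Hpow : r ^ n / INR (fact n) <= exp 1 ^ n / 30 ^ n).
  { apply Rle_trans with ((N / 30) ^ n / INR (fact n)).
    - apply Rmult_le_compat_r; [left; apply Rinv_0_lt_compat; lra | apply pow_incr; lra].
    - unfold Rdiv; rewrite Rpow_mult_distr, pow_inv, <- (exp_nat n 1), Rmult_1_r; fold N.
      replace (N ^ n * / 30 ^ n * / INR (fact n)) with (N ^ n / INR (fact n) * / 30 ^ n) by (unfold Rdiv; ring).
      apply Rmult_le_compat_r; [left; apply Rinv_0_lt_compat, pow_lt; lra |].
      apply rterm_le_exp; lra. }
  assert (Hexp2 : exp r * exp r <= exp (1 / 15) ^ n)
    by (rewrite <- exp_plus, <- exp_nat; apply exp_le; fold N; lra).
  assert (HexpK : exp (INR K) <= exp 1 ^ n)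
    by (rewrite <- exp_nat; apply exp_le; unfold n; rewrite S_INR; lra).
  assert (Hqn : q ^ n <= q).
  { unfold n; simpl; assert (q ^ K <= 1) by (rewrite <- (pow1 K); apply pow_incr; lra); nra. }
  assert (Hprod : 2 * tail_size r K * exp r * exp (INR K) <= 2 * q ^ n).
  { unfold tail_size; fold n.
    assert (B0 : 0 <= r ^ n / INR (fact n))
      by (apply Rmult_le_pos; [apply pow_le; lra | left; apply Rinv_0_lt_compat; lra]).
    assert (B1 : 0 <= exp r * exp r) by (generalize (exp_pos r); nra).
    apply Rle_trans with (2 * (exp 1 ^ n / 30 ^ n) * exp (1 / 15) ^ n * exp 1 ^ n).
    - replace (2 * (r ^ n / INR (fact n) * exp r) * exp r * exp (INR K))
        with (2 * (r ^ n / INR (fact n)) * (exp r * exp r) * exp (INR K)) by ring.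
      apply Rmult_le_compat; [nra | left; apply exp_pos | apply Rmult_le_compat; nra | exact HexpK].
    - right; unfold q, Rdiv; rewrite !Rpow_mult_distr, pow_inv; ring. }
  lra.
Qed.

Definition cterm (n : nat) (w : C) : C := (Cpow w n / RtoC (INR (fact n)))%C.
Definition texp (K : nat) (w : C) : C := sum_n_m (fun i => cterm i w) 0 K.

Lemma Etrunc_texp l w : Etrunc l w = texp (ceilN l) w.
Proof. reflexivity. Qed.

Ltac Cring := match goal with |- ?a = ?b => change (@eq C a b) end; ring.

Lemma RtoC_inj a b : RtoC a = RtoC b -> a = b.
Proof. intro H; apply (f_equal fst) in H; exact H. Qed.

Lemma RtoC_INR_neq0 n : (0 < n)%nat -> RtoC (INR n) <> 0%C.
Proof. intros Hn H; apply RtoC_inj in H; apply lt_0_INR in Hn; lra. Qed.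

Lemma RtoC_fact_neq0 n : RtoC (INR (fact n)) <> 0%C.
Proof. apply RtoC_INR_neq0, lt_O_fact. Qed.

Lemma Cmod_cterm n w : Cmod (cterm n w) = rterm n (Cmod w).
Proof.
  unfold cterm, rterm; rewrite Cmod_div by apply RtoC_fact_neq0.
  rewrite Cmod_pow, Cmod_R, Rabs_pos_eq; [reflexivity | left; apply fact_pos].
Qed.

Lemma texp_norm K w : Cmod (texp K w) <= rtexp K (Cmod w).
Proof.
  eapply Rle_trans; [apply (norm_sum_n_m (V := C_NormedModule)) |].
  right; apply sum_n_m_ext; intro; apply Cmod_cterm.
Qed.

Lemma sum_n_m_morph {G H : AbelianMonoid} (f : G -> H) (Hz : f zero = zero)
  (Hp : forall x y, f (plus x y) = plus (f x) (f y)) a n m :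
  f (sum_n_m a n m) = sum_n_m (fun i => f (a i)) n m.
Proof.
  revert n; induction m as [| m IH]; intros n.
  - destruct n; [rewrite !sum_n_n; reflexivity | rewrite !sum_n_m_zero by lia; exact Hz].
  - destruct (le_lt_dec n (S m)) as [Hle | Hlt].
    + destruct (Nat.eq_dec n (S m)) as [-> | Hne]; [rewrite !sum_n_n; reflexivity |].
      rewrite !sum_n_Sm, Hp, IH by lia; reflexivity.
    + rewrite !sum_n_m_zero by lia; exact Hz.
Qed.

Lemma Cconj_RtoC r : Cconj (RtoC r) = RtoC r.
Proof. apply injective_projections; simpl; ring. Qed.

Lemma texp_conj K w : Cconj (texp K w) = texp K (Cconj w).
Proof.
  unfold texp; rewrite (@sum_n_m_morph C_AbelianMonoid C_AbelianMonoid Cconj).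
  - apply sum_n_m_ext; intro n; unfold cterm.
    rewrite Cdiv_conj by apply RtoC_fact_neq0; rewrite Cpow_conj, Cconj_RtoC; reflexivity.
  - apply injective_projections; simpl; ring.
  - intros; apply Cplus_conj.
Qed.

Lemma sum_RtoC (f : nat -> R) n m :
  RtoC (sum_n_m f n m) = sum_n_m (fun i => RtoC (f i)) n m.
Proof.
  apply (@sum_n_m_morph R_AbelianMonoid C_AbelianMonoid RtoC); [reflexivity |].
  intros x y; exact (RtoC_plus x y).
Qed.

Lemma cterm_RtoC n a : cterm n (RtoC a) = RtoC (rterm n a).
Proof.
  unfold cterm, rterm; rewrite RtoC_div, RtoC_pow; [reflexivity |].
  generalize (fact_pos n); lra.
Qed.

Lemma texp_RtoC K a : texp K (RtoC a) = RtoC (rtexp K a).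
Proof. unfold texp, rtexp; rewrite sum_RtoC; apply sum_n_m_ext; intro; apply cterm_RtoC. Qed.

Lemma cterm_S n w : (RtoC (INR (S n)) * cterm (S n) w = w * cterm n w)%C.
Proof.
  unfold cterm; rewrite Cpow_S; change (fact (S n)) with (S n * fact n)%nat.
  rewrite mult_INR, RtoC_mult; field; split; [apply RtoC_fact_neq0 | apply RtoC_INR_neq0; lia].
Qed.

Lemma Csum_mult_l (c : C) a n m :
  (c * sum_n_m a n m)%C = sum_n_m (fun i => c * a i)%C n m.
Proof. symmetry; exact (@sum_n_m_mult_l C_Ring c a n m). Qed.
Lemma Csum_mult_r (c : C) a n m :
  (sum_n_m a n m * c)%C = sum_n_m (fun i => a i * c)%C n m.
Proof. symmetry; exact (@sum_n_m_mult_r C_Ring c a n m). Qed.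
Lemma Csum_plus (a b : nat -> C) n m :
  sum_n_m (fun i => a i + b i)%C n m = (sum_n_m a n m + sum_n_m b n m)%C.
Proof. exact (@sum_n_m_plus C_AbelianMonoid a b n m). Qed.
Lemma Csum_Sn_m (a : nat -> C) n m :
  (n <= m)%nat -> sum_n_m a n m = (a n + sum_n_m a (S n) m)%C.
Proof. exact (@sum_Sn_m C_AbelianMonoid a n m). Qed.
Lemma Csum_n_Sm (a : nat -> C) n m :
  (n <= S m)%nat -> sum_n_m a n (S m) = (sum_n_m a n m + a (S m))%C.
Proof. exact (@sum_n_Sm C_AbelianMonoid a n m). Qed.

Lemma cterm_binomial w v n :
  sum_n_m (fun i => cterm i w * cterm (n - i) v)%C 0 n = cterm n (w + v).
Proof.
  induction n as [| n IH]; [rewrite sum_n_n; unfold cterm; simpl; field |].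
  set (c := RtoC (INR (S n))).
  assert (Hc : c <> 0%C) by (apply RtoC_INR_neq0; lia).
  enough (H : (c * sum_n_m (fun i => cterm i w * cterm (S n - i) v)%C 0 (S n))%C
              = (c * cterm (S n) (w + v))%C).
  { apply (f_equal (Cmult (/ c))) in H.
    rewrite !Cmult_assoc, Cinv_l, !Cmult_1_l in H by exact Hc; exact H. }
  unfold c at 2; rewrite cterm_S, <- IH, Csum_mult_l.
  rewrite (sum_n_m_ext_loc _ (fun i => (RtoC (INR i) * cterm i w) * cterm (S n - i) v
              + cterm i w * (RtoC (INR (S n - i)) * cterm (S n - i) v))%C).
  2:{ intros i Hi; unfold c; replace (INR (S n)) with (INR i + INR (S n - i))
        by (rewrite <- plus_INR; f_equal; lia).
      rewrite RtoC_plus; Cring. }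
  rewrite Csum_plus, (Csum_Sn_m _ 0) by lia.
  rewrite <- sum_n_m_S, (Csum_n_Sm _ 0 n) by lia.
  rewrite (sum_n_m_ext _ (fun i => w * (cterm i w * cterm (n - i) v))%C).
  2:{ intro i; rewrite cterm_S; simpl (S n - S i)%nat; Cring. }
  rewrite (sum_n_m_ext_loc (fun i => cterm i w * (RtoC (INR (S n - i)) * cterm (S n - i) v))%C
             (fun i => v * (cterm i w * cterm (n - i) v))%C).
  2:{ intros i Hi; replace (S n - i)%nat with (S (n - i)) by lia; rewrite cterm_S; Cring. }
  rewrite <- !Csum_mult_l, Nat.sub_diag; simpl INR; rewrite !Cmult_0_l; Cring.
Qed.

Lemma sum_triangle {G : AbelianMonoid} (g : nat -> nat -> G) K :
  sum_n_m (fun n => sum_n_m (fun i => g i (n - i)%nat) 0 n) 0 K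
  = sum_n_m (fun i => sum_n_m (fun j => g i j) 0 (K - i)) 0 K.
Proof.
  induction K as [| K IH]; [rewrite !sum_n_n; reflexivity |].
  rewrite sum_n_Sm, IH by lia.
  rewrite (sum_n_Sm (fun i => sum_n_m (fun j => g i j) 0 (S K - i))) by lia.
  rewrite Nat.sub_diag, sum_n_n.
  rewrite (sum_n_m_ext_loc (fun i => sum_n_m (fun j => g i j) 0 (S K - i))
            (fun i => plus (sum_n_m (fun j => g i j) 0 (K - i)) (g i (S K - i)%nat))).
  2:{ intros i Hi; replace (S K - i)%nat with (S (K - i)) by lia; rewrite sum_n_Sm by lia; reflexivity. }
  rewrite sum_n_m_plus, (sum_n_Sm (fun i => g i (S K - i)%nat)) by lia.
  rewrite Nat.sub_diag, plus_assoc; reflexivity.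
Qed.

(* The defect of E_K(w) E_K(v) against E_K(w+v): the monomials with i,j <= K < i+j. *)
Definition cdefect (K : nat) (w v : C) : C :=
  sum_n_m (fun i => sum_n_m (fun j => (cterm i w * cterm j v)%C) (S (K - i)) K) 0 K.
Definition rdefect (K : nat) (a b : R) : R :=
  sum_n_m (fun i => sum_n_m (fun j => rterm i a * rterm j b) (S (K - i)) K) 0 K.

Lemma texp_mult_defect K w v : (texp K w * texp K v - texp K (w + v))%C = cdefect K w v.
Proof.
  assert (Hsum : texp K (w + v)
          = sum_n_m (fun i => sum_n_m (fun j => (cterm i w * cterm j v)%C) 0 (K - i)) 0 K).
  { unfold texp; rewrite <- (sum_triangle (G := C_AbelianMonoid) (fun i j => (cterm i w * cterm j v)%C)).
    apply sum_n_m_ext; intro n; symmetry; apply cterm_binomial. }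
  assert (Hprod : (texp K w * texp K v)%C
          = (sum_n_m (fun i => sum_n_m (fun j => (cterm i w * cterm j v)%C) 0 (K - i)) 0 K
             + cdefect K w v)%C).
  { unfold cdefect; rewrite <- Csum_plus; unfold texp at 1; rewrite Csum_mult_r.
    apply sum_n_m_ext_loc; intros i Hi; unfold texp; rewrite Csum_mult_l.
    exact (@sum_n_m_Chasles C_AbelianMonoid _ 0 (K - i) K ltac:(lia) ltac:(lia)). }
  rewrite Hsum, Hprod; Cring.
Qed.

Lemma cdefect_norm K w v : Cmod (cdefect K w v) <= rdefect K (Cmod w) (Cmod v).
Proof.
  unfold cdefect, rdefect.
  eapply Rle_trans; [apply (norm_sum_n_m (V := C_NormedModule)) |].
  apply sum_n_m_le; intro i.
  eapply Rle_trans; [apply (norm_sum_n_m (V := C_NormedModule)) |].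
  right; apply sum_n_m_ext; intro j; change norm with Cmod.
  rewrite Cmod_mult, !Cmod_cterm; reflexivity.
Qed.

Lemma rdefect_eq K a b : rdefect K a b = rtexp K a * rtexp K b - rtexp K (a + b).
Proof.
  apply RtoC_inj; rewrite RtoC_minus, RtoC_mult, <- !texp_RtoC, RtoC_plus, texp_mult_defect.
  unfold rdefect, cdefect; rewrite sum_RtoC; apply sum_n_m_ext; intro i.
  rewrite sum_RtoC; apply sum_n_m_ext; intro j; rewrite RtoC_mult, !cterm_RtoC; reflexivity.
Qed.

Lemma texp_mult_bound K w v :
  Cmod (texp K w * texp K v - texp K (w + v))%C <= tail_size (Cmod w + Cmod v) K.
Proof.
  rewrite texp_mult_defect; eapply Rle_trans; [apply cdefect_norm |].
  rewrite rdefect_eq; set (a := Cmod w); set (b := Cmod v).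
  assert (Ha : 0 <= a) by apply Cmod_ge_0; assert (Hb : 0 <= b) by apply Cmod_ge_0.
  assert (Hprod : rtexp K a * rtexp K b <= exp (a + b)).
  { rewrite exp_plus; apply Rmult_le_compat; try apply rtexp_nonneg; try apply rtexp_le_exp; auto. }
  assert (Htail := exp_tail_bound (a + b) K); rewrite (Rabs_pos_eq (a + b)) in Htail by lra.
  apply Rabs_le_between in Htail; lra.
Qed.

(* Two-sided comparison |E_K(w)|^2 = e^{2 Re w} + O(tail): writing |E_K(w)|^2 as
   E_K(w) E_K(conj w), compare it with E_K(2 Re w) and then with e^{2 Re w}. *)
Lemma texp_sq_near_exp K w :
  Rabs (Cmod (texp K w) ^ 2 - exp (2 * Re w)) <= 2 * tail_size (2 * Cmod w) K.
Proof.
  assert (Hprod : Rabs (Cmod (texp K w) ^ 2 - rtexp K (2 * Re w)) <= tail_size (2 * Cmod w) K).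
  { rewrite <- Cmod_R, RtoC_minus, Cmod2_conj, texp_conj, <- texp_RtoC.
    replace (RtoC (2 * Re w)) with (w + Cconj w)%C
      by (destruct w as [x y]; apply injective_projections; simpl; ring).
    eapply Rle_trans; [apply texp_mult_bound |].
    rewrite Cmod_conj; right; f_equal; ring. }
  assert (Htail : Rabs (rtexp K (2 * Re w) - exp (2 * Re w)) <= tail_size (2 * Cmod w) K).
  { rewrite Rabs_minus_sym; eapply Rle_trans; [apply exp_tail_bound |].
    apply tail_size_mono; split; [apply Rabs_pos |].
    rewrite Rabs_mult, Rabs_pos_eq by lra; generalize (re_le_Cmod w); lra. }
  replace (Cmod (texp K w) ^ 2 - exp (2 * Re w)) with
    ((Cmod (texp K w) ^ 2 - rtexp K (2 * Re w)) + (rtexp K (2 * Re w) - exp (2 * Re w))) by ring.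
  eapply Rle_trans; [apply Rabs_triang | lra].
Qed.

Lemma texp_sq_relative K w :
  Cmod w <= INR (S K) / 60 ->
  Rabs (Cmod (texp K w) ^ 2 - exp (2 * Re w)) <= exp (- INR K) * exp (2 * Re w).
Proof.
  intro Hw; eapply Rle_trans; [apply texp_sq_near_exp |].
  set (r := 2 * Cmod w).
  assert (Hr : 0 <= r <= INR (S K) / 30) by (unfold r; generalize (Cmod_ge_0 w); lra).
  assert (Hsmall := tail_size_small r K Hr).
  assert (Hre : exp (- r) <= exp (2 * Re w)).
  { apply exp_le; unfold r; generalize (re_le_Cmod w); intro H.
    apply Rabs_le_between in H; lra. }
  rewrite exp_Ropp in Hre |- *.
  assert (P1 := exp_pos r); assert (P2 := exp_pos (INR K)).
  assert (Hsize : 2 * tail_size r K <= / exp (INR K) * / exp r).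
  { rewrite <- Rinv_mult; apply Rmult_le_reg_r with (exp (INR K) * exp r); [nra |].
    rewrite Rinv_l by nra; lra. }
  eapply Rle_trans; [exact Hsize |].
  apply Rmult_le_compat_l; [left; apply Rinv_0_lt_compat, P2 | exact Hre].
Qed.

Lemma ln_lower_bound u : 0 < u -> 1 - / u <= ln u.
Proof.
  intro Hu; assert (H := exp_ineq1_le (- ln u)).
  rewrite exp_Ropp, exp_ln in H by exact Hu; lra.
Qed.

Lemma succ_mul_pow3_le_pow8 K : INR (S K) * 3 ^ K <= 8 ^ K.
Proof.
  induction K as [| K IH]; [simpl; lra |].
  rewrite S_INR in *; rewrite S_INR; change (3 ^ S K) with (3 * 3 ^ K); change (8 ^ S K) with (8 * 8 ^ K).
  assert (0 <= 3 ^ K) by (apply pow_le; lra); assert (0 <= INR K) by apply pos_INR; nra.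
Qed.

Lemma sum_le_const (a : nat -> R) c K :
  (forall i, (i <= K)%nat -> a i <= c) -> sum_n_m a 0 K <= INR (S K) * c.
Proof.
  induction K as [| K IH]; intro H; [rewrite sum_n_n; simpl; generalize (H 0%nat (le_n _)); lra |].
  rewrite sum_n_Sm by lia; change plus with Rplus.
  assert (sum_n_m a 0 K <= INR (S K) * c) by (apply IH; intros; apply H; lia).
  generalize (H (S K) (le_n _)); rewrite (S_INR (S K)); lra.
Qed.

(* Crude bound, moderate ratio: for 21/20 <= u <= 8, E_K(uK/64) <= e^{uK/64} <= u^K. *)
Lemma rtexp_bound_moderate K u : 21 / 20 <= u <= 8 -> rtexp K (u * INR K / 64) <= u ^ K.
Proof.
  intro Hu; assert (HK := pos_INR K).
  eapply Rle_trans; [apply rtexp_le_exp; apply Rmult_le_pos; [nra | lra] |].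
  rewrite <- (exp_ln u), <- exp_nat, exp_ln by lra; apply exp_le.
  assert (Hln := ln_lower_bound u ltac:(lra)).
  assert (u / 64 <= 1 - / u).
  { apply Rmult_le_reg_r with u; [lra |].
    rewrite Rmult_minus_distr_r, Rinv_l by lra; nra. }
  nra.
Qed.

(* Crude bound, large ratio: for u > 8 each of the K+1 terms is at most
   max(1,u/64)^K e^K, and (K+1) e^K <= 8^K. *)
Lemma rtexp_bound_large K u : 8 < u -> rtexp K (u * INR K / 64) <= u ^ K.
Proof.
  intro Hu; assert (HK := pos_INR K).
  set (Mx := Rmax 1 (u / 64)).
  assert (HM1 : 1 <= Mx) by apply Rmax_l; assert (HM2 : u / 64 <= Mx) by apply Rmax_r.
  assert (Hterm : forall i, (i <= K)%nat -> rterm i (u * INR K / 64) <= Mx ^ K * exp (INR K)).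
  { intros i Hi; unfold rterm.
    replace (u * INR K / 64) with (u / 64 * INR K) by field.
    rewrite Rpow_mult_distr; unfold Rdiv at 1; rewrite Rmult_assoc.
    apply Rmult_le_compat.
    - apply pow_le; lra.
    - apply Rmult_le_pos; [apply pow_le, HK | left; apply Rinv_0_lt_compat, fact_pos].
    - apply Rle_trans with (Mx ^ i); [apply pow_incr; lra | apply Rle_pow; [exact HM1 | exact Hi]].
    - apply (rterm_le_exp i (INR K) HK). }
  assert (Hsum : rtexp K (u * INR K / 64) <= INR (S K) * (Mx ^ K * exp (INR K))).
  { apply sum_le_const, Hterm. }
  assert (E3 : exp (INR K) <= 3 ^ K).
  { rewrite <- (Rmult_1_r (INR K)), exp_nat; apply pow_incr.
    split; [left; apply exp_pos | apply exp_le_3]. }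
  assert (P8 := succ_mul_pow3_le_pow8 K).
  assert (HMK : 0 <= Mx ^ K) by (apply pow_le; lra).
  assert (H8 : INR (S K) * exp (INR K) <= 8 ^ K).
  { eapply Rle_trans; [| exact P8]; apply Rmult_le_compat_l; [apply pos_INR | exact E3]. }
  apply Rle_trans with (8 ^ K * Mx ^ K); [nra |].
  rewrite <- Rpow_mult_distr; apply pow_incr; split; [lra |].
  unfold Mx, Rmax; destruct Rle_dec; lra.
Qed.

Lemma texp_crude_bound K w u :
  21 / 20 <= u -> Cmod w <= u * INR K / 64 -> Cmod (texp K w) <= u ^ K.
Proof.
  intros Hu Hw; eapply Rle_trans; [apply texp_norm |].
  eapply Rle_trans; [apply (rtexp_mono K _ (u * INR K / 64)); split; [apply Cmod_ge_0 | exact Hw] |].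
  destruct (Rle_dec u 8).
  - apply rtexp_bound_moderate; lra.
  - apply rtexp_bound_large; lra.
Qed.

Lemma ceilN_ge x : 0 <= x -> x <= INR (ceilN x).
Proof.
  intro Hx; unfold ceilN, ceilZ; destruct (base_Int_part (- x)) as [H1 H2].
  assert (0 <= - Int_part (- x))%Z by (apply le_IZR; rewrite opp_IZR; lra).
  rewrite INR_IZR_INZ, Z2Nat.id, opp_IZR by exact H; lra.
Qed.

Lemma rk_small k : 0 < k -> k <= 1 / 2 -> (2 <= rk k)%nat /\ 2 / k <= INR (2 * rk k - 2).
Proof.
  intros Hk Hk2; unfold rk; destruct (Rle_dec k (1 / 2)) as [_ | ]; [| lra].
  split; [lia |].
  replace (2 * (2 + ceilN (1 / k)) - 2)%nat with (2 + 2 * ceilN (1 / k))%nat by lia.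
  assert (H := ceilN_ge (1 / k) ltac:(left; apply Rdiv_lt_0_compat; lra)).
  rewrite plus_INR, mult_INR; simpl; unfold Rdiv in *; lra.
Qed.

Lemma rk_large k : 1 / 2 < k -> 2 * k / (2 * k - 1) <= INR (rk k).
Proof.
  intro Hk2; unfold rk; destruct (Rle_dec k (1 / 2)); [lra |].
  assert (H := ceilN_ge (2 * k / (2 * k - 1)) ltac:(left; apply Rdiv_lt_0_compat; lra)).
  rewrite plus_INR; simpl; lra.
Qed.

Lemma rpow_nonneg x y : 0 <= rpow x y.
Proof. unfold rpow; destruct (Req_EM_T x 0); [lra | left; apply exp_pos]. Qed.

Lemma rpow_le_pow x y U n : 0 <= x <= U -> 1 <= U -> 0 <= y <= INR n -> rpow x y <= U ^ n.
Proof.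
  intros Hx HU Hy; unfold rpow; destruct (Req_EM_T x 0); [apply pow_le; lra |].
  rewrite <- Rpower_pow by lra.
  apply Rle_trans with (Rpower U y); [apply Rle_Rpower_l; lra | apply Rle_Rpower; lra].
Qed.

Lemma large_ratio_i k a b U :
  0 < k -> k <= 1 / 2 -> 0 <= a <= U -> 0 <= b <= U -> 1 <= U ->
  rpow a (2 / k) * b ^ 2 <= U ^ (2 * rk k).
Proof.
  intros Hk Hk2 Ha Hb HU; destruct (rk_small k Hk Hk2) as [Hr Hexp].
  replace (2 * rk k)%nat with (2 * rk k - 2 + 2)%nat by lia; rewrite pow_add.
  apply Rmult_le_compat; [apply rpow_nonneg | apply pow2_ge_0 | | apply pow_incr; lra].
  apply rpow_le_pow; try lra; split; [left; apply Rdiv_lt_0_compat |]; lra.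
Qed.

Lemma large_ratio_ii k a b U :
  1 / 2 < k -> 0 <= a <= U -> 0 <= b <= U -> 1 <= U ->
  rpow (b * a) (2 * k / (2 * k - 1)) <= U ^ (2 * rk k).
Proof.
  intros Hk2 Ha Hb HU; rewrite pow_mult.
  apply rpow_le_pow; [split; [nra | apply Rmult_le_compat; lra] | nra |].
  split; [left; apply Rdiv_lt_0_compat; lra | apply rk_large, Hk2].
Qed.

(* Small-ratio case: a = |N_j(s,k)| and b = |N_j(s,k-1)| are within a factor 1 +- d
   of e^{kX} and e^{(k-1)X} in square, where X = Re P_j(s). *)
Section SmallRatio.
Variables (k d X a b : R).
Hypotheses (Hk : 0 < k) (Hd : 0 < d < 1) (Ha0 : 0 <= a) (Hb0 : 0 <= b).
Hypothesis Ha : Rabs (a ^ 2 - exp (2 * (k * X))) <= d * exp (2 * (k * X)).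
Hypothesis Hb : Rabs (b ^ 2 - exp (2 * ((k - 1) * X))) <= d * exp (2 * ((k - 1) * X)).

Lemma small_ratio_upper : a ^ 2 <= exp (ln (1 + d) + 2 * (k * X)) /\
                          b ^ 2 <= exp (ln (1 + d) + 2 * ((k - 1) * X)).
Proof.
  rewrite !exp_plus, exp_ln by lra.
  apply Rabs_le_between in Ha; apply Rabs_le_between in Hb; lra.
Qed.

(* The lower bound a^2 >= (1-d) e^{2kX} > 0 makes the logarithm of a available. *)
Lemma small_ratio_a_pos : 0 < a.
Proof.
  apply Rabs_le_between in Ha; assert (He := exp_pos (2 * (k * X))).
  destruct (Req_dec a 0) as [-> |]; [simpl in Ha; nra | lra].
Qed.

Lemma small_ratio_ln_a : 2 * ln a <= ln (1 + d) + 2 * (k * X).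
Proof.
  assert (Hpos := small_ratio_a_pos).
  replace (2 * ln a) with (ln (a ^ 2)) by (rewrite ln_pow by exact Hpos; simpl; ring).
  rewrite <- (ln_exp (ln (1 + d) + 2 * (k * X))).
  apply ln_le; [apply pow_lt, Hpos | apply small_ratio_upper].
Qed.

Lemma small_ratio_rhs c q :
  c <= q -> exp (c * ln (1 + d)) * exp (2 * (k * X)) <= a ^ 2 * Rpower (1 + d) q / (1 - d) ^ 2.
Proof.
  intro Hcq.
  assert (HL : 0 <= ln (1 + d)) by (rewrite <- ln_1; apply ln_le; lra).
  assert (Hc : exp (c * ln (1 + d)) <= Rpower (1 + d) q) by (apply exp_le; nra).
  assert (Hlow : exp (2 * (k * X)) * (1 - d) ^ 2 <= a ^ 2).
  { apply Rabs_le_between in Ha; assert (He := exp_pos (2 * (k * X))); nra. }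
  assert (Hp := exp_pos (c * ln (1 + d))); assert (He := exp_pos (2 * (k * X))).
  assert (Hd2 : 0 < (1 - d) ^ 2) by (apply pow_lt; lra).
  apply Rmult_le_reg_r with ((1 - d) ^ 2); [exact Hd2 |].
  replace (a ^ 2 * Rpower (1 + d) q / (1 - d) ^ 2 * (1 - d) ^ 2)
    with (Rpower (1 + d) q * a ^ 2) by (field; lra).
  rewrite Rmult_assoc; apply Rmult_le_compat; [lra | nra | exact Hc | exact Hlow].
Qed.

(* Part (i): a^{2/k} b^2 <= (1+d)^{1/k+1} e^{2kX}. *)
Lemma small_ratio_i :
  rpow a (2 / k) * b ^ 2 <= a ^ 2 * Rpower (1 + d) (2 / k + 2) / (1 - d) ^ 2.
Proof.
  assert (Hpos := small_ratio_a_pos); assert (Hln := small_ratio_ln_a).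
  destruct small_ratio_upper as [_ Hbsq].
  eapply Rle_trans; [| apply (small_ratio_rhs (1 / k + 1)); unfold Rdiv in *;
                       assert (0 < / k) by (apply Rinv_0_lt_compat, Hk); lra].
  unfold rpow; destruct (Req_EM_T a 0) as [Ha_eq | _]; [lra |].
  eapply Rle_trans.
  - apply Rmult_le_compat; [left; apply exp_pos | apply pow2_ge_0 | | exact Hbsq].
    apply exp_le with (y := ln (1 + d) / k + 2 * X).
    apply Rmult_le_reg_l with k; [exact Hk |]; field_simplify; lra.
  - rewrite <- !exp_plus; apply exp_le; right; field; lra.
Qed.

(* Part (ii): (ab)^{2k/(2k-1)} <= (1+d)^{2k/(2k-1)} e^{2kX}. *)
Lemma small_ratio_ii :
  1 / 2 < k ->
  rpow (b * a) (2 * k / (2 * k - 1))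
  <= a ^ 2 * Rpower (1 + d) (2 * k / (2 * k - 1)) / (1 - d) ^ 2.
Proof.
  intro Hk2; set (p := 2 * k / (2 * k - 1)).
  assert (Hp : 0 < p) by (unfold p; apply Rdiv_lt_0_compat; lra).
  assert (Hp2 : p * (2 * k - 1) = 2 * k) by (unfold p; field; lra).
  eapply Rle_trans; [| apply (small_ratio_rhs p p); lra].
  unfold rpow; destruct (Req_EM_T (b * a) 0) as [| Hba]; [left; apply Rmult_lt_0_compat; apply exp_pos |].
  assert (Hbpos : 0 < b) by (destruct (Req_dec b 0) as [-> |]; [rewrite Rmult_0_l in Hba; lra | lra]).
  assert (Hlnb : 2 * ln b <= ln (1 + d) + 2 * ((k - 1) * X)).
  { replace (2 * ln b) with (ln (b ^ 2)) by (rewrite ln_pow by exact Hbpos; simpl; ring).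
    rewrite <- (ln_exp (ln (1 + d) + 2 * ((k - 1) * X))).
    apply ln_le; [apply pow_lt, Hbpos | apply small_ratio_upper]. }
  assert (Hlna := small_ratio_ln_a); assert (Hpos := small_ratio_a_pos).
  unfold Rpower; rewrite <- exp_plus; apply exp_le; rewrite ln_mult by lra.
  assert (p * (ln b + ln a) <= p * (ln (1 + d) + (2 * k - 1) * X))
    by (apply Rmult_le_compat_l; lra).
  assert (p * ((2 * k - 1) * X) = 2 * (k * X)) by (rewrite <- Rmult_assoc, Hp2; ring).
  lra.
Qed.

End SmallRatio.

(* With K = ceil(ell),
   c = 64 max(2, k+3/2) and u = c|z|/K we have |Q_j(s,k)| = u^K, and both k and
   k-1 are at most c/64 in absolute value, so |kz|, |(k-1)z| <= uK/64. *)
Section Pointwise.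
Variables (k l : R) (z : C).
Hypotheses (Hk : 0 < k) (Hl : 0 < l).

Let K := ceilN l.
Let c := 64 * Rmax 2 (k + 3 / 2).
Let u := c * Cmod z / INR K.

Lemma K_pos : 0 < INR K.
Proof. generalize (ceilN_ge l ltac:(lra)); fold K; lra. Qed.

Lemma u_nonneg : 0 <= u.
Proof.
  assert (Hc : 128 <= c) by (unfold c; generalize (Rmax_l 2 (k + 3 / 2)); lra).
  unfold u; apply Rmult_le_pos; [generalize (Cmod_ge_0 z); nra |].
  left; apply Rinv_0_lt_compat, K_pos.
Qed.

Lemma Q_modulus : Cmod (Cpow (RtoC c * z / RtoC (INR K)) K) = u ^ K.
Proof.
  assert (HK := K_pos).
  rewrite Cmod_pow, Cmod_div by (apply RtoC_INR_neq0, INR_lt; simpl; lra).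
  assert (Hc : 0 <= c) by (unfold c; generalize (Rmax_l 2 (k + 3 / 2)); lra).
  rewrite Cmod_mult, !Cmod_R, !Rabs_pos_eq by lra; reflexivity.
Qed.

Lemma scaled_arg_bound a : Rabs a <= c / 64 -> Cmod (RtoC a * z) <= u * INR K / 64.
Proof.
  intro Ha; assert (HK := K_pos).
  rewrite Cmod_mult, Cmod_R; unfold u.
  replace (c * Cmod z / INR K * INR K / 64) with (c / 64 * Cmod z) by (field; lra).
  apply Rmult_le_compat_r; [apply Cmod_ge_0 | exact Ha].
Qed.

Lemma k_scaled_bounds : Rabs k <= c / 64 /\ Rabs (k - 1) <= c / 64.
Proof.
  assert (H := Rmax_r 2 (k + 3 / 2)); unfold c.
  split; [rewrite Rabs_pos_eq |apply Rabs_le]; lra.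
Qed.

Lemma small_ratio_texp a :
  u <= 21 / 20 -> Rabs a <= c / 64 ->
  Rabs (Cmod (texp K (RtoC a * z)) ^ 2 - exp (2 * (a * Re z)))
  <= exp (- l) * exp (2 * (a * Re z)).
Proof.
  intros Hu Ha; assert (HK := K_pos); assert (Hu0 := u_nonneg).
  rewrite <- re_scal_l; eapply Rle_trans.
  - apply texp_sq_relative; eapply Rle_trans; [apply scaled_arg_bound, Ha |].
    rewrite S_INR; nra.
  - apply Rmult_le_compat_r; [left; apply exp_pos |].
    apply exp_le; generalize (ceilN_ge l ltac:(lra)); fold K; lra.
Qed.

Theorem pointwise_bound :
  (k <= 1 / 2 ->
     rpow (Cmod (Etrunc l (RtoC k * z))) (2 / k) * Cmod (Etrunc l (RtoC (k - 1) * z)) ^ 2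
     <= Cmod (Etrunc l (RtoC k * z)) ^ 2 * Rpower (1 + exp (- l)) (2 / k + 2)
          / (1 - exp (- l)) ^ 2
        + Cmod (Cpow (RtoC c * z / RtoC (INR K)) K) ^ (2 * rk k)) /\
  (1 / 2 < k ->
     rpow (Cmod (Etrunc l (RtoC (k - 1) * z) * Etrunc l (RtoC k * z))) (2 * k / (2 * k - 1))
     <= Cmod (Etrunc l (RtoC k * z)) ^ 2 * Rpower (1 + exp (- l)) (2 * k / (2 * k - 1))
          / (1 - exp (- l)) ^ 2
        + Cmod (Cpow (RtoC c * z / RtoC (INR K)) K) ^ (2 * rk k)).
Proof.
  rewrite Q_modulus, !Etrunc_texp; fold K; rewrite Cmod_mult.
  set (a := Cmod (texp K (RtoC k * z))); set (b := Cmod (texp K (RtoC (k - 1) * z))).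
  assert (Ha : 0 <= a) by apply Cmod_ge_0; assert (Hb : 0 <= b) by apply Cmod_ge_0.
  assert (Hd : 0 < exp (- l) < 1) by (split; [apply exp_pos | rewrite <- exp_0; apply exp_increasing; lra]).
  assert (Hu0 := u_nonneg); destruct k_scaled_bounds as [Hck Hck1].
  assert (Hmain : forall q, 0 <= a ^ 2 * Rpower (1 + exp (- l)) q / (1 - exp (- l)) ^ 2).
  { intro q; apply Rmult_le_pos; [apply Rmult_le_pos; [apply pow2_ge_0 | left; apply exp_pos] |].
    left; apply Rinv_0_lt_compat, pow_lt; lra. }
  destruct (Rle_dec u (21 / 20)) as [Hsmall | Hlarge].
  -
    assert (HQ : 0 <= (u ^ K) ^ (2 * rk k)) by (apply pow_le, pow_le, Hu0).
    assert (Hak := small_ratio_texp k Hsmall Hck); assert (Hak1 := small_ratio_texp (k - 1) Hsmall Hck1).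
    split; intro Hk2.
    + generalize (small_ratio_i k _ (Re z) a b Hk Hd Ha Hak Hak1); lra.
    + generalize (small_ratio_ii k _ (Re z) a b Hk Hd Ha Hb Hak Hak1 Hk2); lra.
  -
    assert (HU : 1 <= u ^ K) by (apply pow_R1_Rle; lra).
    assert (HaU : a <= u ^ K) by (apply texp_crude_bound, scaled_arg_bound; lra).
    assert (HbU : b <= u ^ K) by (apply texp_crude_bound, scaled_arg_bound; lra).
    split; intro Hk2.
    + generalize (large_ratio_i k a b (u ^ K) Hk Hk2 ltac:(lra) ltac:(lra) HU)
        (Hmain (2 / k + 2)); lra.
    + generalize (large_ratio_ii k a b (u ^ K) Hk2 ltac:(lra) ltac:(lra) HU)
        (Hmain (2 * k / (2 * k - 1))); lra.
Qed.

End Pointwise.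

Theorem lemma3p2 :
  forall k : R, 0 < k ->
  exists M0 : R, forall M : R, M0 <= M ->
  exists T0 : R, forall T : R, T0 <= T ->
  forall m : nat, is_max_alpha_idx T M m ->
  forall j : nat, (1 <= j)%nat -> (j <= 1 + m)%nat ->
  forall s : C,
    (k <= 1 / 2 ->
      rpow (Cmod (Nj k T j s k)) (2 / k) * (Cmod (Nj k T j s (k - 1))) ^ 2
      <= (Cmod (Nj k T j s k)) ^ 2 * Rpower (1 + deltaj k T j) (2 / k + 2)
           / (1 - deltaj k T j) ^ 2
         + (Cmod (Qj k T j s)) ^ (2 * rk k)) /\
    (1 / 2 < k ->
      rpow (Cmod (Nj k T j s (k - 1) * Nj k T j s k)%C) (2 * k / (2 * k - 1))
      <= (Cmod (Nj k T j s k)) ^ 2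
           * Rpower (1 + deltaj k T j) (2 * k / (2 * k - 1))
           / (1 - deltaj k T j) ^ 2
         + (Cmod (Qj k T j s)) ^ (2 * rk k)).
Proof.
  intros k Hk; exists 0; intros M _; exists 0; intros T _ m _ j _ _ s.
  assert (Hell : 0 < ell k T j).
  { unfold ell; apply Rmult_lt_0_compat; [apply Rmult_lt_0_compat; [apply exp_pos | exact Hk] |].
    apply exp_pos. }
  exact (pointwise_bound k (ell k T j) (Pj T j s) Hk Hell).
Qed.
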